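(* Let $n\ge 1$, let $x_1,\dots,x_n$ be distinct integers each greater than $1$, and let $D=\{1,0,x_1,\dots,x_n\}$. If $(T,s)$ is an optimal signed tree realizing $D$ and $ab$ is an edge of $T$ with $s(ab)=-$, then $sdeg(a)=sdeg(b)=0$.
   Context: A signed tree is a pair $(T,s)$ where $T$ is a finite tree and $s:E(T)\to\{+,-\}$. The signed degree $sdeg(v)$ of a vertex is the number of incident positive edges minus the number of incident negative edges. $(T,s)$ realizes $D$ if $D=\{sdeg(v):v\in V(T)\}$. $\sigma(D)=\min\{|V(T)|: \text{some signed tree }(T,s)\text{ realizes }D\}$, and a signed tree $(T,s)$ realizing $D$ is optimal if $|V(T)|=\sigma(D)$. *)

From mathcomp Require Import all_boot all_order all_algebra.
Set Implicit Arguments. Unset Strict Implicit. Unset Printing Implicit Defensive.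
Import Order.TTheory GRing.Theory Num.Theory.

(* A sign function is a
   relation s : rel 'I_k, where s u v = true means the edge uv is positive
   (+) and s u v = false means negative (-); it is required symmetric so that
   it is a function of the unordered edge.  Its values on non-edges are irrelevant. *)

Definition simple_graph (k : nat) (e : rel 'I_k) : Prop :=
  symmetric e /\ irreflexive e.

Definition is_tree (k : nat) (e : rel 'I_k) : Prop :=
  [/\ simple_graph e, 0 < k,
      (forall x y : 'I_k, connect e x y)
    & (forall c : seq 'I_k, ucycle e c -> size c < 3)].

Definition signed_tree (k : nat) (e s : rel 'I_k) : Prop :=
  is_tree e /\ symmetric s.

Definition sdeg (k : nat) (e s : rel 'I_k) (v : 'I_k) : int :=
  (#|[set y | e v y && s v y]|)%:Z - (#|[set y | e v y && ~~ s v y]|)%:Z.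

Definition realizes (k : nat) (e s : rel 'I_k) (D : seq int) : Prop :=
  forall d : int, (d \in D) = [exists v : 'I_k, sdeg e s v == d].

Definition optimal (k : nat) (e s : rel 'I_k) (D : seq int) : Prop :=
  [/\ signed_tree e s, realizes e s D &
      forall (k' : nat) (e' s' : rel 'I_k'),
        signed_tree e' s' -> realizes e' s' D -> k <= k'].

From mathcomp Require Import all_boot all_order all_algebra.
Import Order.TTheory GRing.Theory Num.Theory.
From mathcomp Require Import zify.
Set Implicit Arguments. Unset Strict Implicit. Unset Printing Implicit Defensive.

(* In a tree on k vertices the excesses deg v - 1 are nonnegative and sum to
   k - 2.  A vertex of signed degree d > 0 with q negative edges has degree
   d + 2q, and a vertex of signed degree 0 has even positive degree.  So if a
   tree realizing D had a negative edge ab with sdeg a <> 0, counting the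
   excesses of a vertex of signed degree 0, of vertices of signed degrees x_i,
   and the extra 2 at a, would give k >= sum_i (x_i - 1) + 5.  But D is
   realized on sum_i (x_i - 1) + 4 vertices by a caterpillar: the path
   0 - 1 - ... - (n+3) whose only negative edge is {1, 2}, with x_j - 2 leaves
   hung on the vertex j + 3. *)

Section Forest.
Variables (T : finType) (e : rel T).
Hypotheses (e_sym : symmetric e) (e_irr : irreflexive e)
  (e_acyclic : forall c : seq T, ucycle e c -> size c < 3).

Definition deg_in (A : {set T}) v := #|[set y in A | e v y]|.

Lemma acyclic_path_fresh x p y :
  uniq (x :: p) -> path e x p -> e x y -> y != head x p -> y \notin x :: p.
Proof.
move=> uxp pxp exy yh; rewrite in_cons negb_or; apply/andP; split.
  by apply: contraTneq exy => ->; rewrite e_irr.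
apply/negP=> yp; case/path.splitPr: p / yp uxp pxp yh => p1 p2.
case: p1 => [|z p1]; first by rewrite /= eqxx.
rewrite -cat_rcons -cat_cons cat_uniq cat_path => /andP[uc _] /andP[pc _] _.
suff /e_acyclic : ucycle e (x :: rcons (z :: p1) y) by rewrite /= size_rcons.
by rewrite /ucycle uc andbT /cycle rcons_path last_rcons -e_sym exy andbT.
Qed.

Lemma exists_leaf (A : {set T}) : A != set0 -> exists2 v, v \in A & deg_in A v <= 1.
Proof.
(* Otherwise every vertex of A has a neighbour in A other than any given
   vertex, so acyclicity lets uniq paths in A grow beyond #|A| vertices. *)
case/set0Pn=> x0 x0A; apply/exists_inP; apply: contraLR isT => /exists_inPn branching.
have branch x h : x \in A -> exists2 y, y \in A & e x y && (y != h).
  move=> xA; apply/exists_inP; apply: contraR (branching x xA) => /exists_inPn noy.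
  rewrite -(cards1 h); apply/subset_leq_card/subsetP=> y; rewrite !inE => /andP[yA exy].
  by move: (noy y yA); rewrite exy negbK.
have long_path m : exists x p, [/\ size p = m, all (mem A) (x :: p), uniq (x :: p) & path e x p].
  elim: m => [|m [x [p [sz pA up pth]]]]; first by exists x0, [::]; rewrite /= x0A.
  have [y yA /andP[exy yh]] := branch x (head x p) (allP pA x (mem_head _ _)).
  exists y, (x :: p); split=> //=; first by rewrite sz.
  - by rewrite yA.
  - by rewrite acyclic_path_fresh.
  - by rewrite e_sym exy.
have [x [p [sz pA up _]]] := long_path #|A|.
have : #|x :: p| <= #|A| by apply/subset_leq_card/subsetP/allP.
by rewrite (card_uniqP up) /= sz ltnn.
Qed.

Lemma deg_inE (A : {set T}) v : deg_in A v = \sum_(y in A) e v y.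
Proof. by rewrite /deg_in -sum1dep_card big_mkcondr; apply: eq_bigl. Qed.

Lemma deg_in_setD1 (A : {set T}) v u :
  v \in A -> deg_in A u = e u v + deg_in (A :\ v) u.
Proof. by move=> vA; rewrite !deg_inE (big_setD1 v vA). Qed.

Lemma sum_deg_in_setD1 (A : {set T}) v : v \in A ->
  \sum_(u in A) deg_in A u = \sum_(u in A :\ v) deg_in (A :\ v) u + (deg_in A v).*2.
Proof.
move=> vA; rewrite (big_setD1 v vA) /= (eq_bigr _ (fun u _ => deg_in_setD1 u vA)).
rewrite big_split /=.
have -> : \sum_(u in A :\ v) e u v = deg_in A v.
  by rewrite (deg_in_setD1 v vA) e_irr deg_inE; apply: eq_bigr => u _; rewrite e_sym.
lia.
Qed.

Lemma forest_deg_sum (A : {set T}) : A != set0 -> \sum_(v in A) deg_in A v + 2 <= (#|A|).*2.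
Proof.
have [m] := ubnP #|A|; elim: m A => [//|m IH] A szA An0.
have [v vA leaf_v] := exists_leaf An0.
rewrite (sum_deg_in_setD1 vA) (cardsD1 v A) vA.
have [B0|Bn0] := eqVneq (A :\ v) set0.
  by rewrite (deg_in_setD1 v vA) e_irr B0 !deg_inE !big_set0 cards0.
have := IH (A :\ v); rewrite (cardsD1 v A) vA in szA; move/(_ szA Bn0); lia.
Qed.
End Forest.

Lemma tree_deg_sum k (e : rel 'I_k) : is_tree e -> \sum_v #|[set y | e v y]| + 2 <= k.*2.
Proof.
case=> -[e_sym e_irr] k_gt0 _ e_acyclic.
have nonempty : [set: 'I_k] != set0 by apply/set0Pn; exists (Ordinal k_gt0).
have := forest_deg_sum e_sym e_irr e_acyclic nonempty; rewrite cardsT card_ord.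
congr (_ + _ <= _); apply: eq_big => [v|v _]; rewrite ?inE //.
by apply: eq_card => y; rewrite !inE.
Qed.

Lemma tree_deg_gt0 k (e : rel 'I_k) a b v : is_tree e -> e a b -> 0 < #|[set y | e v y]|.
Proof.
case=> _ _ e_conn _ eab; rewrite card_gt0; apply/set0Pn.
have [->|va] := eqVneq v a; first by exists b; rewrite inE.
case/connectP: (e_conn v a) => -[/= _ av|y p /= /andP[evy _] _]; last by exists y; rewrite inE.
by rewrite av eqxx in va.
Qed.

Lemma tree_sum_deg_pred k (e : rel 'I_k) a b :
  is_tree e -> e a b -> \sum_(v < k) (#|[set y | e v y]|).-1 + 2 <= k.
Proof.
move=> tree_e eab; have := tree_deg_sum tree_e.
rewrite (eq_bigr (fun v => (#|[set y | e v y]|).-1 + 1)) => [|v _]; last first.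
  by rewrite addn1 prednK // (tree_deg_gt0 _ tree_e eab).
by rewrite big_split /= sum1_card card_ord; lia.
Qed.

Section ParentTree.
Variable t : seq nat.
Hypothesis parent_le : forall i, i < size t -> nth 0 t i <= i.

Local Notation K := (size t).+1.

(* Vertex [i.+1] is attached to [nth 0 t i]; the root [0] gets the junk
   parent [0], which the [0 < _] guards of [parent_rel] ignore. *)
Definition parent (v : nat) := nth 0 (0 :: t) v.

Definition parent_rel : rel 'I_K :=
  fun u v => (0 < u) && (parent u == v) || (0 < v) && (parent v == u).

Lemma parent_lt (v : 'I_K) : 0 < v -> parent v < v.
Proof. by case: v => [[|i] //= lt_i_t] _; apply: parent_le. Qed.

Lemma parent_rel_sym : symmetric parent_rel.
Proof. by move=> u v; rewrite /parent_rel orbC. Qed.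

Lemma parent_rel_irr : irreflexive parent_rel.
Proof.
move=> u; rewrite /parent_rel orbb; apply/negP=> /andP[u_gt0 /eqP pu].
by have := parent_lt u_gt0; rewrite pu ltnn.
Qed.

Lemma parent_rel_connect_root (v : 'I_K) : connect parent_rel v ord0.
Proof.
have [m] := ubnP (val v); elim: m v => [//|m IH] v lt_v_m.
have [v0|v_gt0] := posnP v; first by rewrite (_ : v = ord0) //; apply: val_inj.
have lt_pv := parent_lt v_gt0.
pose w := Ordinal (ltn_trans lt_pv (ltn_ord v)).
apply: (connect_trans (connect1 (_ : parent_rel v w))); first by rewrite /parent_rel v_gt0 eqxx.
by apply: IH; rewrite /= (leq_trans lt_pv) // -ltnS.
Qed.

Lemma parent_rel_connect u v : connect parent_rel u v.
Proof.
apply: connect_trans (parent_rel_connect_root u) _.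
by rewrite (sym_connect_sym parent_rel_sym) parent_rel_connect_root.
Qed.

Lemma parent_rel_below (m w : 'I_K) : parent_rel m w -> w <= m -> val w = parent m.
Proof.
case/orP=> /andP[w_gt0 /eqP pw] le_wm; first by [].
by have := parent_lt w_gt0; rewrite pw ltnNge le_wm.
Qed.

Lemma parent_rel_acyclic c : ucycle parent_rel c -> size c < 3.
Proof.
(* Both cycle neighbours of the largest vertex must be its parent. *)
case: c => [//|c0 c] cyc_c; rewrite ltnNge; apply/negP=> c_ge3.
pose m := [arg max_(i > c0 in c0 :: c) val i].
have [m_in m_max] : m \in c0 :: c /\ forall y, y \in c0 :: c -> val y <= val m.
  by rewrite /m; case: arg_maxnP; [exact: mem_head | split].
case: (rot_to m_in) => i p rot_c.
have := cyc_c; rewrite -(rot_ucycle i) rot_c => /andP[].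
have : size (m :: p) >= 3 by rewrite -rot_c size_rot.
case: p rot_c => [|w1 [|w2 p]] // rot_c _.
rewrite /cycle rcons_path /= => /andP[/andP[e1 _] e2] /andP[m_notin /andP[w1_notin _]].
have m_max' y : y \in [:: m, w1, w2 & p] -> val y <= val m.
  by move=> y_in; apply: m_max; rewrite -(mem_rot i) rot_c.
have w1E : val w1 = parent m.
  by apply: parent_rel_below e1 (m_max' _ _); rewrite !inE eqxx orbT.
have lastE : val (last w2 p) = parent m.
  apply: parent_rel_below; first by rewrite parent_rel_sym.
  by apply: m_max'; rewrite (in_cons m) (in_cons w1) mem_last !orbT.
by move: w1_notin; rewrite (_ : w1 = last w2 p) ?mem_last //; apply: val_inj; rewrite w1E.
Qed.

Lemma parent_tree : is_tree parent_rel.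
Proof.
split=> //; first by split; [exact: parent_rel_sym | exact: parent_rel_irr].
- exact: parent_rel_connect.
- exact: parent_rel_acyclic.
Qed.

Lemma card_children (v : nat) :
  #|[set y : 'I_K | (0 < y) && (parent y == v)]| = count_mem v t.
Proof.
rewrite -sum1dep_card big_mkcond big_ord_recl /= add0n -big_mkcond /=.
rewrite (eq_bigl (fun i : 'I_(size t) => nth 0 t i == v)) => [|i]; last first.
  by rewrite /bump leq0n.
rewrite -(big_mkord (fun i => nth 0 t i == v) (fun _ => 1)).
by rewrite -(big_nth 0 (pred1 v) (fun _ => 1)) sum1_count.
Qed.

Lemma parent_rel_deg (v : 'I_K) :
  #|[set y | parent_rel v y]| = (0 < v) + count_mem (val v) t.
Proof.
pose up := [set y : 'I_K | (0 < v) && (parent v == y)].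
pose down := [set y : 'I_K | (0 < y) && (parent y == v)].
have -> : [set y | parent_rel v y] = up :|: down by apply/setP=> y; rewrite !inE.
have up_down : up :&: down = set0.
  apply/setP=> y; rewrite !inE; apply/negP=> /andP[/andP[v_gt0 /eqP pv] /andP[y_gt0 /eqP py]].
  by have := parent_lt v_gt0; have := parent_lt y_gt0; rewrite pv py; lia.
rewrite cardsU up_down cards0 subn0 card_children; congr (_ + _).
have [v0|v_gt0] := posnP v; first by rewrite /up v0; apply: eq_card0 => y; rewrite !inE.
rewrite /up v_gt0 /= -(cards1 (Ordinal (ltn_trans (parent_lt v_gt0) (ltn_ord v)))).
by apply: eq_card => y; rewrite !inE -val_eqE eq_sym.
Qed.
End ParentTree.

Lemma card_nbrs_split (T : finType) (e s : rel T) v :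
  #|[set y | e v y]| = #|[set y | e v y && s v y]| + #|[set y | e v y && ~~ s v y]|.
Proof.
by rewrite -(cardsID [set y | s v y]); congr (_ + _); apply: eq_card => y;
  rewrite !inE // andbC.
Qed.

Lemma sdeg_deg_neg k (e s : rel 'I_k) v :
  sdeg e s v = (#|[set y | e v y]|%:Z - (#|[set y | e v y && ~~ s v y]|.*2)%:Z)%R.
Proof. by rewrite /sdeg (card_nbrs_split e s); lia. Qed.

Section SingleNegativeEdge.
Variables (T : finType) (a b : T).

Definition single_neg_sign : rel T :=
  fun u v => ~~ ((u == a) && (v == b) || (u == b) && (v == a)).

Lemma single_neg_sign_sym : symmetric single_neg_sign.
Proof. by move=> u v; rewrite /single_neg_sign [in RHS]orbC (andbC (v == a)) andbC. Qed.

Lemma card_neg_nbrs (e : rel T) v : e a b -> e b a -> a != b ->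
  #|[set y | e v y && ~~ single_neg_sign v y]| = (v == a) + (v == b).
Proof.
move=> eab eba neq_ab; rewrite /single_neg_sign.
have [->|va] := eqVneq v a.
  rewrite (negbTE neq_ab) /= addn0 -(cards1 b); apply: eq_card => y.
  by rewrite !inE negbK orbF; case: eqVneq => [->|]; rewrite ?eab ?andbF.
have [->|vb] := eqVneq v b.
  rewrite /= add0n -(cards1 a); apply: eq_card => y.
  by rewrite !inE negbK; case: eqVneq => [->|]; rewrite ?eba ?andbF.
by apply: eq_card0 => y; rewrite !inE negbK /= andbF.
Qed.

End SingleNegativeEdge.

Section Caterpillar.
Variables (n : nat) (X : 'I_n -> nat).
Hypothesis X_ge2 : forall j, 2 <= X j.

Definition legs := flatten [seq nseq (X j - 2) (j + 3) | j <- enum 'I_n].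
Definition caterpillar := iota 0 (n + 3) ++ legs.

Local Notation K := (size caterpillar).+1.

Lemma mem_legs y : y \in legs -> 3 <= y < n + 3.
Proof. by case/flatten_mapP=> j _; rewrite mem_nseq => /andP[_ /eqP->]; have := ltn_ord j; lia. Qed.

Lemma count_legs_hub (j : 'I_n) : count_mem (j + 3) legs = X j - 2.
Proof.
rewrite /legs count_flatten -map_comp sumnE big_map enumT /= (bigD1 j) //=.
rewrite count_nseq /= eqxx mul1n big1 ?addn0 // => i ij.
have /negbTE ij' : (i : nat) != j by [].
by rewrite count_nseq /= eqn_add2r ij' mul0n.
Qed.

Lemma count_legs_out v : ~~ (3 <= v < n + 3) -> count_mem v legs = 0.
Proof.
move=> v_out; apply/count_memPn; apply: contra v_out; exact: mem_legs.
Qed.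

Lemma count_caterpillar v : count_mem v caterpillar = (v < n + 3) + count_mem v legs.
Proof. by rewrite count_cat count_uniq_mem ?iota_uniq // mem_iota. Qed.

Lemma caterpillar_parent_le i : i < size caterpillar -> nth 0 caterpillar i <= i.
Proof.
rewrite /caterpillar nth_cat size_iota size_cat size_iota => lt_i.
case: ltnP => [lt_i_n3|le_n3_i]; first by rewrite nth_iota.
have /mem_legs : nth 0 legs (i - (n + 3)) \in legs by apply: mem_nth; rewrite ltn_subLR.
lia.
Qed.

Lemma size_caterpillar : K = \sum_(j < n) (X j).-1 + 4.
Proof.
rewrite size_cat size_iota /legs size_flatten /shape -map_comp sumnE big_map big_enum /=.
rewrite (eq_bigl xpredT) //.
under eq_bigr do rewrite size_nseq.
have -> : \sum_j (X j).-1 = \sum_j (X j - 2 + 1).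
  by apply: eq_bigr => j _; have := X_ge2 j; lia.
rewrite big_split /= sum1_card card_ord; lia.
Qed.

Lemma caterpillar_size_ge : n + 4 <= K.
Proof. by rewrite size_cat size_iota; lia. Qed.

Lemma caterpillar_inordK i : i < n + 4 -> (inord i : 'I_K) = i :> nat.
Proof. by move=> lt_i; rewrite inordK //; have := caterpillar_size_ge; lia. Qed.

Local Notation cat_rel := (@parent_rel caterpillar).

Definition caterpillar_sign : rel 'I_K := single_neg_sign (inord 1) (inord 2).

Lemma caterpillar_signed_tree : signed_tree cat_rel caterpillar_sign.
Proof.
split; [exact: parent_tree caterpillar_parent_le | exact: single_neg_sign_sym].
Qed.

Lemma sdeg_caterpillar (v : 'I_K) : sdeg cat_rel caterpillar_sign v =
  (((0 < v) + (v < n + 3) + count_mem (val v) legs)%N%:Z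
    - (((val v == 1) + (val v == 2)).*2)%N%:Z)%R.
Proof.
have e12 : cat_rel (inord 1) (inord 2).
  by rewrite /parent_rel !caterpillar_inordK ?addn4 //= /parent /caterpillar addn3.
rewrite sdeg_deg_neg (parent_rel_deg caterpillar_parent_le) count_caterpillar card_neg_nbrs //; last first.
- by rewrite -val_eqE /= !caterpillar_inordK ?addn4.
- by rewrite /parent_rel orbC.
by rewrite -!val_eqE /= !caterpillar_inordK ?addn4 // addnA.
Qed.

Lemma sdeg_caterpillar_leaf (v : 'I_K) :
  (val v == 0) || (n + 3 <= v) -> sdeg cat_rel caterpillar_sign v = 1%R.
Proof.
move=> /= v_leaf; rewrite sdeg_caterpillar (count_legs_out (v := val v)) /=; lia.
Qed.

Lemma sdeg_caterpillar_neg_edge (v : 'I_K) :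
  (val v == 1) || (val v == 2) -> sdeg cat_rel caterpillar_sign v = 0%R.
Proof.
move=> /= v12; rewrite sdeg_caterpillar (count_legs_out (v := val v)) /=; lia.
Qed.

Lemma sdeg_caterpillar_hub (v : 'I_K) (j : 'I_n) :
  val v = j + 3 -> sdeg cat_rel caterpillar_sign v = (X j)%:Z%R.
Proof.
move=> /= vE; rewrite sdeg_caterpillar /= vE count_legs_hub.
by have := ltn_ord j; have := X_ge2 j; lia.
Qed.

Lemma caterpillar_realizes :
  realizes cat_rel caterpillar_sign (1 :: 0 :: [seq (X j)%:Z | j <- enum 'I_n])%R.
Proof.
move=> d; rewrite !inE; apply/idP/existsP.
  case/or3P=> [/eqP->|/eqP->|/mapP[j _ ->]].
  - by exists ord0; rewrite sdeg_caterpillar_leaf.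
  - by exists (inord 1); rewrite sdeg_caterpillar_neg_edge //= caterpillar_inordK ?addn4.
  - exists (inord (j + 3)); rewrite (sdeg_caterpillar_hub (j := j)) //=.
    by rewrite caterpillar_inordK //; have := ltn_ord j; lia.
case=> v /eqP <-.
have [lt_v3|ge_v3] := ltnP v 3.
  have [v0|v_gt0] := posnP v; first by rewrite sdeg_caterpillar_leaf //= v0.
  by rewrite sdeg_caterpillar_neg_edge //=; lia.
have [lt_v_n3|ge_v_n3] := ltnP v (n + 3).
  have lt_j : v - 3 < n by lia.
  rewrite (sdeg_caterpillar_hub (j := Ordinal lt_j)) /=; last by lia.
  by apply/orP; right; apply/orP; right; apply: map_f; rewrite mem_enum.
by rewrite sdeg_caterpillar_leaf //= ge_v_n3 orbT.
Qed.

End Caterpillar.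

(* A vertex of signed degree 0 has even positive degree, hence degree >= 2. *)
Definition deg_cost (d : int) : nat := if d == 0%R then 1 else (`|d|%N).-1.

Lemma deg_pred_ge k (e s : rel 'I_k) v :
  0 < #|[set y | e v y]| -> (0 <= sdeg e s v)%R ->
  deg_cost (sdeg e s v) + (sdeg e s v != 0%R) * (#|[set y | e v y && ~~ s v y]|).*2
    <= (#|[set y | e v y]|).-1.
Proof. by rewrite /deg_cost sdeg_deg_neg; case: eqP; lia. Qed.

Lemma negative_edge_realizer_size_ge n (x : 'I_n -> int)
    (xinj : injective x) (xgt1 : forall i, (1 < x i)%R)
    k (e s : rel 'I_k) a b :
  signed_tree e s -> realizes e s (1 :: 0 :: [seq x i | i <- enum 'I_n])%R ->
  e a b -> ~~ s a b -> sdeg e s a != 0%R ->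
  \sum_(i < n) (`|x i|%N).-1 + 5 <= k.
Proof.
move=> [tree_e _] real_D eab nsab sa_neq0.
have sdeg_ge0 v : (0 <= sdeg e s v)%R.
  have : [exists w, sdeg e s w == sdeg e s v] by apply/existsP; exists v.
  rewrite -real_D !inE => /or3P[/eqP->|/eqP->|/mapP[i _ ->]] //.
  exact: ltW (lt_trans ltr01 (xgt1 i)).
have /existsP[z /eqP sdeg_z] : [exists z, sdeg e s z == 0%R] by rewrite -real_D !inE eqxx orbT.
have [u sdeg_u] : exists u : 'I_n -> 'I_k, forall i, sdeg e s (u i) = x i.
  apply: (@fin_all_exists _ (fun=> 'I_k) (fun i v => sdeg e s v = x i)) => i.
  have /existsP[v /eqP] : [exists v, sdeg e s v == x i].
    by rewrite -real_D !inE map_f ?mem_enum ?orbT.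
  by exists v.
have u_inj : injective u by move=> i j /(congr1 (sdeg e s)); rewrite !sdeg_u => /xinj.
have z_notin_u : z \notin [set u i | i in 'I_n].
  by apply/imsetP=> -[i _ zE]; have := xgt1 i; rewrite -sdeg_u -zE sdeg_z.
pose cost v := deg_cost (sdeg e s v).
pose penalty v := (sdeg e s v != 0%R) * (#|[set y | e v y && ~~ s v y]|).*2.
have cost_ge : \sum_(i < n) (`|x i|%N).-1 + 1 <= \sum_(v < k) cost v.
  apply: leq_trans (_ : \sum_(v in z |: [set u i | i in 'I_n]) cost v <= _).
    rewrite big_setU1 //= big_imset /=; last by move=> i j _ _ /u_inj.
    rewrite /cost sdeg_z addnC leq_add2l; apply: leq_sum => i _.
    by rewrite sdeg_u /deg_cost; have := xgt1 i; case: eqP => [->|].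
  by rewrite [leqRHS](bigID (mem (z |: [set u i | i in 'I_n]))) leq_addr.
have penalty_ge : 2 <= \sum_(v < k) penalty v.
  rewrite (bigD1 a) //= /penalty sa_neq0 mul1n; apply: leq_trans (leq_addr _ _).
  suff : 0 < #|[set y | e a y && ~~ s a y]| by lia.
  by rewrite card_gt0; apply/set0Pn; exists b; rewrite inE eab.
have sum_le : \sum_(v < k) (cost v + penalty v) <= \sum_(v < k) (#|[set y | e v y]|).-1.
  apply: leq_sum => v _; apply: deg_pred_ge (sdeg_ge0 v).
  exact: tree_deg_gt0 tree_e eab.
apply: leq_trans (tree_sum_deg_pred tree_e eab).
rewrite -[5]/(1 + 2 + 2) !addnA leq_add2r.
by apply: leq_trans sum_le; rewrite big_split leq_add.
Qed.

Unset Implicit Arguments.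

Theorem mainTheorem9 (n : nat) (hn : 1 <= n) (x : 'I_n -> int)
    (xinj : injective x) (xgt1 : forall i, (1 < x i)%R)
    (k : nat) (e s : rel 'I_k) :
  optimal e s (1%R :: 0%R :: [seq x i | i <- enum 'I_n]) ->
  forall a b : 'I_k, e a b -> ~~ s a b ->
    sdeg e s a = 0%R /\ sdeg e s b = 0%R.
Proof.
(* The argument does not need [hn]: it also works for n = 0. *)
move=> [signed_e real_D minimal].
pose X i := `|x i|%N.
have X_ge2 i : 2 <= X i by have := xgt1 i; rewrite /X; lia.
have D_X : [seq x i | i <- enum 'I_n] = [seq (X i)%:Z | i <- enum 'I_n]%R.
  by apply: eq_map => i; have := xgt1 i; rewrite /X; lia.
have k_le : k <= \sum_(i < n) (X i).-1 + 4.
  rewrite -(size_caterpillar X_ge2); apply: minimal (caterpillar_signed_tree X) _.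
  by rewrite D_X; apply: caterpillar_realizes.
have neg_sdeg0 a b : e a b -> ~~ s a b -> sdeg e s a = 0%R.
  move=> eab nsab; apply/eqP; apply: contraT => sa_neq0.
  have := negative_edge_realizer_size_ge xinj xgt1 signed_e real_D eab nsab sa_neq0.
  by rewrite /X in k_le; lia.
case: signed_e => -[[e_sym _] _ _ _] s_sym a b eab nsab.
by split; [apply: neg_sdeg0 eab nsab | apply: (neg_sdeg0 _ a); rewrite 1?e_sym 1?s_sym].
Qed.
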